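(* Let $s=s(L)$ satisfy $\log^9L\le s\le L/\log^5L$. Let $\Xi_0$ be the random subset of $\mathbb{Z}_L^+=\{0,\dots,\lfloor(L-1)/2\rfloor\}$ obtained by including each element independently with probability $s/L$, and let $\Xi=\Xi_0\cup(-\Xi_0)$ (the support of the symmetric Bernoulli-Gaussian distribution with mean $0$, variance $\zeta^2$ and sparsity parameter $s$). Then for $L$ large enough, the distribution of $\Xi$ is typically $s$-sparse with sparsity constants $(1/2,2)$, and is $s/32$-cosine generic.
   Context: $\mathbb{Z}_L=\{\lfloor-(L-1)/2\rfloor,\dots,\lfloor(L-1)/2\rfloor\}$. A distribution of random subsets $\Xi\subset\mathbb{Z}_L$ is typically $s$-sparse with sparsity constants $(\alpha,\beta)$ if $\alpha s\le|\Xi|\le\beta s$ with probability $1-o_L(1)$. With $\mathcal{V}(\Xi,a)=\mathbf{1}_{\{0\in\Xi\}}+2\sum_{k\in\Xi\setminus\{0\}}\cos^2(2\pi ak/L)$, the distribution is $\Gamma$-cosine generic if with probability $1-o_L(1)$, $\min_{a\in\mathbb{Z}_L}\mathcal{V}(\Xi,a)\ge\Gamma(1-o_L(1))$. *)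

From HB Require Import structures.
From mathcomp Require Import all_boot all_order all_algebra.
From mathcomp Require Import all_classical all_reals all_analysis.
Set Implicit Arguments. Unset Strict Implicit. Unset Printing Implicit Defensive.

Import Order.TTheory GRing.Theory Num.Theory numFieldNormedType.Exports.
Local Open Scope classical_set_scope.
Local Open Scope ring_scope.

(* Z_L = { floor(-(L-1)/2), ..., floor((L-1)/2) } = { j - floor(L/2) : 0 <= j < L } *)
Definition ZL (L : nat) : seq int := [seq (j%:Z - (L./2)%:Z) | j <- iota 0 L].

(* |Z_L^+| where Z_L^+ = {0, ..., floor((L-1)/2)}; element i : 'I_(mplus L)
   of the finite type stands for the integer i. *)
Definition mplus (L : nat) : nat := ((L.-1)./2).+1.

Definition Xi0_mem (L : nat) (A : {set 'I_(mplus L)}) (k : int) : bool :=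
  [exists i : 'I_(mplus L), (i \in A) && ((i : nat)%:Z == k)].

Definition Xi_of (L : nat) (A : {set 'I_(mplus L)}) : pred int :=
  fun k => Xi0_mem A k || Xi0_mem A (- k).

Definition card_in (L : nat) (X : pred int) : nat := count X (ZL L).

Definition cosV (R : realType) (L : nat) (X : pred int) (a : int) : R :=
  (X 0)%:R + 2 * \sum_(k <- ZL L | X k && (k != 0))
                   (cos (2 * pi * a%:~R * k%:~R / L%:R)) ^+ 2.

Definition bern_prob (R : realType) (L : nat) (p : R)
  (E : pred {set 'I_(mplus L)}) : R :=
  \sum_(A : {set 'I_(mplus L)} | E A) p ^+ #|A| * (1 - p) ^+ (mplus L - #|A|).

Definition bg_prob (R : realType) (s : nat -> R) (L : nat)
  (E : pred {set 'I_(mplus L)}) : R := bern_prob (s L / L%:R) E.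
Arguments bg_prob {R} s L E.

Definition typically_sparse (R : realType) (s : nat -> R) (alpha beta : R) : Prop :=
  (fun L : nat => bg_prob s L [pred A | (alpha * s L <= (card_in L (Xi_of A))%:R)
                                       && ((card_in L (Xi_of A))%:R <= beta * s L)])
    @ \oo --> (1 : R).

Definition cosine_generic (R : realType) (s : nat -> R) (Gamma : nat -> R) : Prop :=
  exists eps : nat -> R, eps @ \oo --> (0 : R) /\
    (fun L : nat => bg_prob s L [pred A | all (fun a => Gamma L * (1 - eps L)
                                              <= cosV R L (Xi_of A) a) (ZL L)])
      @ \oo --> (1 : R).

From HB Require Import structures.
From mathcomp Require Import all_boot all_order all_algebra.
From mathcomp Require Import all_classical all_reals all_analysis.
From mathcomp Require Import ring lra zify.
Set Implicit Arguments. Unset Strict Implicit. Unset Printing Implicit Defensive.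
Import Order.TTheory GRing.Theory Num.Theory numFieldNormedType.Exports.
Local Open Scope ring_scope.

(* Up to the
   point 0, |Xi| = 2 |Xi_0|, and V(Xi, a) >= |Xi_0 :&: C_a| / 2, where C_a is the set of
   k > 0 with cos^2 (2 pi a k / L) >= 1/4.  Since cos^2 x < 1/4 forces cos^2 (2 x) > 1/4,
   one of j and 2 j lies in C_a for every j, so |C_a| >= L / 10.  Chernoff bounds for the
   binomial variables |Xi_0| (mean about s/2) and |Xi_0 :&: C_a| (mean at least s/10) make
   each failure probability exp (- c s) <= L^-2 once s >= 3^8 log L, and a union bound over
   the L frequencies a leaves a total failure probability O(1/L). *)

Section BernoulliSubset.
Variables (R : comNzRingType) (T : finType) (p : R).

Definition bern_weight (A : {set T}) : R := p ^+ #|A| * (1 - p) ^+ (#|T| - #|A|).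

Lemma bern_weight_expX (x : R) (S A : {set T}) :
  bern_weight A * x ^+ #|A :&: S| =
  \prod_i (if i \in A then p * (if i \in S then x else 1) else 1 - p).
Proof.
have -> : \prod_i (if i \in A then p * (if i \in S then x else 1) else 1 - p) =
    \prod_i (if i \in A then p else 1 - p) * \prod_i (if i \in A :&: S then x else 1).
  rewrite -big_split /=; apply: eq_bigr => i _; rewrite inE.
  by case: (i \in A); case: (i \in S); rewrite ?mulr1.
rewrite -big_mkcond prodr_const /=; congr (_ * _).
rewrite /bern_weight (bigID (mem A)) /=.
rewrite (eq_bigr (fun=> p)) => [|i ->//].
have -> : \prod_(i | i \notin A) (if i \in A then p else 1 - p) = \prod_(i in ~: A) (1 - p).
  by apply: eq_big => i; rewrite ?inE // => /negbTE ->.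
by rewrite !prodr_const -(cardsC A) addKn.
Qed.

Lemma bern_mgf (x : R) (S : {set T}) :
  \sum_(A : {set T}) bern_weight A * x ^+ #|A :&: S| = (1 - p + p * x) ^+ #|S|.
Proof.
rewrite (eq_bigr _ (fun A _ => bern_weight_expX x S A)).
rewrite -(bigA_distr _ _ (fun i => p * (if i \in S then x else 1)) (fun=> 1 - p)) /=.
rewrite (eq_bigr (fun i => if i \in S then 1 - p + p * x else 1)) => [|i _].
  by rewrite -big_mkcond prodr_const.
by case: (i \in S); ring.
Qed.

Lemma bern_weight_sum : \sum_(A : {set T}) bern_weight A = 1.
Proof.
have := bern_mgf 1 finset.set0; rewrite cards0 expr0 => <-.
by apply: eq_bigr => A _; rewrite expr1n mulr1.
Qed.

Definition bern_pr (E : pred {set T}) : R := \sum_(A | E A) bern_weight A.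

Lemma bern_prC (E : pred {set T}) : bern_pr (predC E) = 1 - bern_pr E.
Proof. by rewrite /bern_pr -bern_weight_sum [in RHS](bigID E) /= addrAC subrr add0r. Qed.

End BernoulliSubset.

Section BernoulliOrdered.
Variables (R : realDomainType) (T : finType) (p : R).
Hypothesis p01 : 0 <= p <= 1.

Lemma bern_weight_ge0 (A : {set T}) : 0 <= bern_weight p A.
Proof. by case/andP: p01 => p0 p1; rewrite mulr_ge0 ?exprn_ge0 ?subr_ge0. Qed.

Lemma bern_pr_ge0 (E : pred {set T}) : 0 <= bern_pr p E.
Proof. by apply: sumr_ge0 => A _; apply: bern_weight_ge0. Qed.

Lemma bern_pr_le (E F : pred {set T}) :
  (forall A, E A -> F A) -> bern_pr p E <= bern_pr p F.
Proof.
move=> EF; rewrite /bern_pr [leLHS]big_mkcond [leRHS]big_mkcond ler_sum // => A _.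
by case: ifP => [/EF -> // | _]; case: ifP => _; rewrite ?bern_weight_ge0.
Qed.

Lemma bern_prU (E F G : pred {set T}) : (forall A, E A -> F A || G A) ->
  bern_pr p E <= bern_pr p F + bern_pr p G.
Proof.
move=> EFG; rewrite /bern_pr [leLHS]big_mkcond [in X in _ + X]big_mkcond.
rewrite [in X in X + _]big_mkcond -big_split.
apply: ler_sum => A _ /=; have w0 := bern_weight_ge0 A.
by case: ifP => [/EFG|_]; case: ifP; case: ifP => //= *; lra.
Qed.

Lemma bern_pr_union_bound (I : Type) (s : seq I) (F : I -> pred {set T})
    (E : pred {set T}) :
  (forall A, E A -> has (F^~ A) s) -> bern_pr p E <= \sum_(i <- s) bern_pr p (F i).
Proof.
elim: s E => [|i s IHs] E EF.
  by rewrite big_nil /bern_pr big_pred0 // => A; apply/negP => /EF.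
rewrite big_cons; apply: le_trans (lerD (lexx _) (IHs _ (fun A => id))).
exact: bern_prU.
Qed.

End BernoulliOrdered.

Lemma bern_pr_chernoff (R : realType) (T : finType) (p c t : R) (S : {set T})
    (E : pred {set T}) : 0 <= p <= 1 ->
  (forall A, E A -> 0 <= c + t * #|A :&: S|%:R) ->
  bern_pr p E <= expR (c + p * (expR t - 1) * #|S|%:R).
Proof.
move=> p01 ES; have w0 := bern_weight_ge0 p01.
pose F A := bern_weight p A * expR (c + t * #|A :&: S|%:R).
have F0 A : 0 <= F A by rewrite mulr_ge0 ?expR_ge0.
apply: (@le_trans _ _ (\sum_A F A)).
  rewrite [leLHS]big_mkcond ler_sum // => A _; case: ifP => // /ES tA.
  by rewrite /F -[leLHS]mulr1 ler_wpM2l // -[leLHS]expR0 ler_expR.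
have -> : \sum_A F A = expR c * (1 - p + p * expR t) ^+ #|S|.
  rewrite -bern_mgf mulr_sumr; apply: eq_bigr => A _.
  by rewrite /F expRD expRM_natr mulrCA.
rewrite expRD ler_wpM2l ?expR_ge0 // expRM_natr.
have base0 : 0 <= 1 - p + p * expR t.
  by case/andP: p01 => *; rewrite addr_ge0 ?subr_ge0 ?mulr_ge0 ?expR_ge0.
rewrite lerXn2r ?nnegrE ?expR_ge0 //.
by apply: le_trans (expR_ge1Dx _); lra.
Qed.

Lemma expR_quarter_le (R : realType) : expR (1 / 4 : R) <= 4 / 3.
Proof.
have e0 := expR_gt0 (1 / 4 : R); have := mulfV (lt0r_neq0 e0).
by have := expR_ge1Dx (- (1 / 4) : R); rewrite expRN; nra.
Qed.

Lemma expR_neg_half_le (R : realType) : expR (- (1 / 2) : R) <= 2 / 3.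
Proof.
have e0 := expR_gt0 (1 / 2 : R); have := mulfV (lt0r_neq0 e0).
by have := expR_ge1Dx (1 / 2 : R); rewrite expRN; nra.
Qed.

Section BernoulliTails.
Variables (R : realType) (T : finType) (p : R) (S : {set T}) (mu k : R).
Hypothesis p01 : 0 <= p <= 1.

Lemma bern_pr_card_gt : p * #|S|%:R <= mu ->
  bern_pr p [pred A | k < #|A :&: S|%:R] <= expR (mu / 3 - k / 4).
Proof.
move=> le_mu.
apply: le_trans (bern_pr_chernoff (c := - (k / 4)) (t := 1 / 4) (S := S) p01 _) _.
  by move=> A /=; lra.
rewrite ler_expR mulrAC; have := expR_quarter_le R; have := expR_ge0 (1 / 4 : R).
have : 0 <= p * #|S|%:R by case/andP: p01 => *; rewrite mulr_ge0.
by nra.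
Qed.

Lemma bern_pr_card_lt : mu <= p * #|S|%:R ->
  bern_pr p [pred A | #|A :&: S|%:R < k] <= expR (k / 2 - mu / 3).
Proof.
move=> mu_le.
apply: le_trans (bern_pr_chernoff (c := k / 2) (t := - (1 / 2)) (S := S) p01 _) _.
  by move=> A /=; lra.
rewrite ler_expR mulrAC; have := expR_neg_half_le R; have := expR_ge0 (- (1 / 2) : R).
have : 0 <= p * #|S|%:R by case/andP: p01 => *; rewrite mulr_ge0.
by nra.
Qed.

End BernoulliTails.

Section CountImage.
Variables (T : finType) (U : eqType) (f : T -> U) (B : {pred T}) (P : pred U).

Lemma count_le_card (s : seq U) : uniq s ->
  {in s, forall k, P k -> k \in [seq f i | i in B]} -> (count P s <= #|B|)%N.
Proof.
move=> s_uniq sB; rewrite -size_filter -(size_image f B).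
apply: uniq_leq_size; first exact: filter_uniq.
by move=> k; rewrite mem_filter => /andP[Pk ks]; apply: sB.
Qed.

Lemma card_le_count (s : seq U) : injective f ->
  {in B, forall i, P (f i) && (f i \in s)} -> (#|B| <= count P s)%N.
Proof.
move=> f_inj Bs; rewrite -size_filter -(size_image f B).
apply: uniq_leq_size; first by rewrite map_inj_uniq ?enum_uniq.
by move=> k /mapP[i]; rewrite mem_enum => /Bs + ->; rewrite mem_filter.
Qed.

End CountImage.

Lemma mulrn_count_le_sum (R : numDomainType) (I : Type) (s : seq I) (P : pred I)
    (F : I -> R) (c : R) : (forall i, P i -> 0 <= F i) ->
  c *+ count (fun i => P i && (c <= F i)) s <= \sum_(i <- s | P i) F i.
Proof.
move=> F0; elim: s => [|i s IHs]; first by rewrite big_nil.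
rewrite big_cons /=; case Pi: (P i) => //=; case cF: (c <= F i).
  by rewrite add1n mulrS lerD.
by rewrite add0n ler_wpDl ?F0.
Qed.

Lemma count_double_ge (P : pred nat) (h : nat) :
  (forall j, P j.+1 || P j.+1.*2) -> (h <= (count P (iota 1 h.*2)).*2)%N.
Proof.
move=> Pj; have h_le : (h <= count (fun j => P j || P j.*2) (iota 1 h))%N.
  rewrite (@eq_in_count _ _ predT) ?count_predT ?size_iota // => -[|j];
  by rewrite mem_iota //= => _; apply: Pj.
have le_low : (count P (iota 1 h) <= count P (iota 1 h.*2))%N.
  by rewrite -addnn iotaD count_cat leq_addr.
have le_even : (count P (map double (iota 1 h)) <= count P (iota 1 h.*2))%N.
  rewrite -!size_filter uniq_leq_size ?filter_uniq ?map_inj_uniq ?iota_uniq //.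
    exact: double_inj.
  move=> k; rewrite !mem_filter => /andP[Pk /mapP[j]].
  by rewrite !mem_iota => j_in kE; rewrite Pk kE /=; lia.
rewrite count_map in le_even; rewrite -addnn.
apply: leq_trans h_le (leq_trans _ (leq_add le_low le_even)).
by rewrite -count_predUI leq_addr.
Qed.

Lemma ZL_uniq L : uniq (ZL L).
Proof. by rewrite map_inj_uniq ?iota_uniq // => i j /addIr []. Qed.

Lemma size_ZL L : size (ZL L) = L.
Proof. by rewrite size_map size_iota. Qed.

Lemma mem_ZL_sym L (i : nat) :
  (0 < L)%N -> (i < mplus L)%N -> (i%:Z \in ZL L) && (- i%:Z \in ZL L).
Proof.
rewrite /mplus -!divn2 => L0 lt_i.
apply/andP; split; apply/mapP.
  by exists (i + L./2)%N; rewrite ?PoszD ?addrK // mem_iota -divn2; lia.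
exists (L./2 - i)%N; first by rewrite mem_iota -divn2; lia.
by rewrite -subzn -?divn2; [ring | lia].
Qed.

Lemma Xi0_memE L (A : {set 'I_(mplus L)}) (k : int) :
  Xi0_mem A k = (k \in [seq (nat_of_ord i)%:Z | i in A]).
Proof.
apply/existsP/mapP => [[i /andP[iA /eqP <-]] | [i iA ->]]; exists i => //.
  by rewrite mem_enum.
by rewrite -mem_enum iA /=.
Qed.

Lemma card_Xi_le L (A : {set 'I_(mplus L)}) : (card_in L (Xi_of A) <= 2 * #|A|)%N.
Proof.
have Xi0_le s : uniq s -> (count (Xi0_mem A) s <= #|A|)%N.
  move=> s_uniq; apply: (count_le_card (f := fun i => (nat_of_ord i)%:Z)) s_uniq _.
  by move=> k _; rewrite Xi0_memE.
have neg_uniq : uniq (map -%R (ZL L)) by rewrite map_inj_uniq ?ZL_uniq //; exact: oppr_inj.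
rewrite mul2n -addnn.
apply: leq_trans _ (leq_add (Xi0_le _ (ZL_uniq L)) (Xi0_le _ neg_uniq)).
by rewrite (count_map -%R) -count_predUI leq_addr.
Qed.

Lemma card_Xi_ge L (A : {set 'I_(mplus L)}) : (0 < L)%N ->
  (2 * #|A| <= card_in L (Xi_of A) + 2)%N.
Proof.
move=> L0; set B := A :\ ord0.
have B_pos i : i \in B -> (0 < i)%N /\ Xi0_mem A i%:Z.
  rewrite !inE => /andP[i0 iA]; split; last by rewrite Xi0_memE map_f ?mem_enum.
  by rewrite lt0n; apply: contraNneq i0 => i0; apply/eqP/val_inj.
have card_pos : (#|B| <= count (fun k : int => (0 < k)%R && Xi_of A k) (ZL L))%N.
  apply: (@card_le_count _ _ (fun i : 'I_(mplus L) => (i : nat)%:Z)).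
    by move=> i j [/val_inj].
  move=> i /B_pos[i0 Ai]; rewrite ltz_nat i0 /Xi_of Ai.
  by case/andP: (mem_ZL_sym L0 (ltn_ord i)).
have card_neg : (#|B| <= count (fun k : int => ~~ (0 < k)%R && Xi_of A k) (ZL L))%N.
  apply: (@card_le_count _ _ (fun i : 'I_(mplus L) => - (i : nat)%:Z)).
    by move=> i j /oppr_inj [/val_inj].
  move=> i /B_pos[_ Ai]; rewrite oppr_gt0 ltNge lez_nat leq0n /Xi_of opprK Ai orbT.
  by case/andP: (mem_ZL_sym L0 (ltn_ord i)).
have split_sign : card_in L (Xi_of A) =
    (count (fun k : int => (0 < k)%R && Xi_of A k) (ZL L)
     + count (fun k : int => ~~ (0 < k)%R && Xi_of A k) (ZL L))%N.
  by rewrite /card_in -!(count_filter _ (Xi_of A)) count_predC size_filter.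
rewrite split_sign; apply: (@leq_trans (2 * (#|B| + 1))).
  by rewrite leq_mul2l (cardsD1 ord0 A) addnC leq_add2l leq_b1 orbT.
by rewrite mulnDr mul2n -addnn leq_add2r leq_add.
Qed.

Definition freq_angle (R : realType) (L : nat) (a k : int) : R :=
  2 * pi * a%:~R * k%:~R / L%:R.

Definition large_cos_set (R : realType) (L : nat) (a : int) : {set 'I_(mplus L)} :=
  [set i : 'I_(mplus L) | (0 < i)%N && (1 / 4 <= cos (freq_angle R L a i) ^+ 2)].

Lemma cosV_ge_card (R : realType) L (A : {set 'I_(mplus L)}) (a : int) : (0 < L)%N ->
  #|A :&: large_cos_set R L a|%:R / 2 <= cosV R L (Xi_of A) a.
Proof.
move=> L0; rewrite /cosV; apply: le_trans (ler_wpDl (ler0n _ _) (lexx _)).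
have sum_ge := @mulrn_count_le_sum R _ (ZL L) (fun k => Xi_of A k && (k != 0))
  (fun k => cos (freq_angle R L a k) ^+ 2) (1 / 4) (fun k _ => sqr_ge0 _).
apply: le_trans (ler_wpM2l _ sum_ge) => //.
have -> n : 2 * ((1 / 4 : R) *+ n) = n%:R / 2 by rewrite -mulrnAr -mulr_natl; field.
rewrite ler_pM2r ?invr_gt0 // ler_nat.
apply: (@card_le_count _ _ (fun i : 'I_(mplus L) => (i : nat)%:Z)).
  by move=> i j [/val_inj].
move=> i; rewrite !inE => /andP[iA /andP[i0 cos_i]]; rewrite /Xi_of Xi0_memE map_f ?mem_enum //=.
by rewrite eqz_nat -lt0n i0 cos_i; case/andP: (mem_ZL_sym L0 (ltn_ord i)).
Qed.

Lemma cos_sqr_double_ge (R : realType) (x : R) :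
  cos x ^+ 2 < 1 / 4 -> 1 / 4 <= cos (x *+ 2) ^+ 2.
Proof.
rewrite cos_mulr2n mulr2n expr2; have := sqr_ge0 (cos x); rewrite expr2 => ? ?.
nra.
Qed.

Lemma freq_angle_double (R : realType) L a (k : nat) :
  freq_angle R L a k.*2 = freq_angle R L a k *+ 2.
Proof. by rewrite /freq_angle -muln2 -!pmulrn natrM; ring. Qed.

Lemma large_cos_set_card (R : realType) L a :
  (20 <= L)%N -> (L <= 10 * #|large_cos_set R L a|)%N.
Proof.
move=> L20; set h := ((L.-1)./2)./2.
pose P (j : nat) := 1 / 4 <= cos (freq_angle R L a j) ^+ 2 :> R.
have half_le : (h <= (count P (iota 1 h.*2)).*2)%N.
  apply: count_double_ge => j; rewrite /P -implyNb -ltNge; apply/implyP.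
  by move=> /cos_sqr_double_ge; rewrite -freq_angle_double.
have count_le : (count P (iota 1 h.*2) <= #|large_cos_set R L a|)%N.
  apply: (count_le_card (f := @nat_of_ord _)) (iota_uniq _ _) _ => k.
  rewrite mem_iota => /andP[k1 kh] Pk; have k_lt : (k < mplus L)%N.
    by move: kh; rewrite /h /mplus -!divn2; lia.
  by apply/mapP; exists (inord k); rewrite ?mem_enum ?inE inordK // k1.
have : (L <= 4 * h + 4)%N by rewrite /h -!divn2; lia.
have : (4 <= h)%N by rewrite /h -!divn2; lia.
move: half_le; rewrite -muln2; lia.
Qed.

Lemma bern_probE (R : realType) L (p : R) (E : pred {set 'I_(mplus L)}) :
  bern_prob p E = bern_pr p E.
Proof. by rewrite /bern_prob /bern_pr /bern_weight card_ord. Qed.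

Lemma mplus_bounds L : (0 < L)%N -> (L <= 2 * mplus L <= L + 1)%N.
Proof. by rewrite /mplus -!divn2; lia. Qed.

Lemma expR_le_inv_sqr (R : realType) (x e : R) :
  0 < x -> e <= - (2 * ln x) -> expR e <= (x ^+ 2)^-1.
Proof.
move=> x0 le_e; apply: le_trans (_ : expR (- (2 * ln x)) <= _).
  by rewrite ler_expR.
by rewrite expRN expRM_natl lnK.
Qed.

(* 3^8 ln L <= ln^9 L once ln L >= 3; the three tail bounds below only need
   960 ln L <= sL, the cosine one being the most demanding. *)
Definition sparse_regime (R : realType) (L : nat) (sL : R) : Prop :=
  [/\ (20 <= L)%N, 3 <= ln (L%:R : R), 6561 * ln (L%:R : R) <= sL & sL <= L%:R].

Section SparseRegime.
Variables (R : realType) (L : nat) (sL : R).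
Hypothesis regime : sparse_regime L sL.

Local Notation p := (sL / L%:R).

Let L_pos : (0 < L)%N.
Proof. by case: regime => L20 _ _ _; apply: leq_trans L20. Qed.

Let L_gt0 : 0 < L%:R :> R.
Proof. by rewrite ltr0n. Qed.

Let p01 : 0 <= p <= 1.
Proof.
have [_ lnL3 sL_ge sL_le] := regime; have sL0 : 0 <= sL by lra.
by rewrite divr_ge0 ?ler0n //= ler_pdivrMr ?mul1r.
Qed.

Lemma bern_pr_card_large :
  bern_pr p [pred A : {set 'I_(mplus L)} | sL < #|A|%:R] <= (L%:R ^+ 2)^-1.
Proof.
have [_ lnL3 sL_ge sL_le] := regime.
apply: le_trans (bern_pr_le p01 (F := [pred A | sL < #|A :&: [set: _]|%:R]) _) _.
  by move=> A /=; rewrite finset.setIT.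
apply: le_trans (bern_pr_card_gt (mu := sL / 2 + 1 / 2) sL p01 _) _.
- have /andP[_] := mplus_bounds L_pos.
  rewrite cardsT card_ord -(ler_nat R) natrM natrD => mL.
  by rewrite mulrAC ler_pdivrMr //; nra.
- by apply: expR_le_inv_sqr => //; lra.
Qed.

Lemma bern_pr_card_small :
  bern_pr p [pred A : {set 'I_(mplus L)} | #|A|%:R < sL / 4 + 1] <= (L%:R ^+ 2)^-1.
Proof.
have [_ lnL3 sL_ge sL_le] := regime.
apply: le_trans (bern_pr_le p01 (F := [pred A | #|A :&: [set: _]|%:R < sL / 4 + 1]) _) _.
  by move=> A /=; rewrite finset.setIT.
apply: le_trans (bern_pr_card_lt (mu := sL / 2) (sL / 4 + 1) p01 _) _.
- have /andP[+ _] := mplus_bounds L_pos.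
  rewrite cardsT card_ord -(ler_nat R) natrM => mL.
  by rewrite mulrAC ler_pdivlMr //; nra.
- by apply: expR_le_inv_sqr => //; lra.
Qed.

Lemma bern_pr_cos_small (a : int) :
  bern_pr p [pred A | #|A :&: large_cos_set R L a|%:R < sL / 16] <= (L%:R ^+ 2)^-1.
Proof.
have [L20 lnL3 sL_ge sL_le] := regime.
apply: le_trans (bern_pr_card_lt (mu := sL / 10) (sL / 16) p01 _) _.
- have := large_cos_set_card R a L20; rewrite -(ler_nat R) natrM => mL.
  by rewrite mulrAC ler_pdivlMr //; nra.
- by apply: expR_le_inv_sqr => //; lra.
Qed.

Let inv_sqr_le : (L%:R ^+ 2)^-1 <= L%:R^-1 :> R.
Proof.
by rewrite expr2 invfM ler_piMl ?invr_ge0 ?ler0n // invf_le1 // ler1n.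
Qed.

Lemma sparse_failure_le :
  `|1 - bern_prob p [pred A : {set 'I_(mplus L)} |
         (1 / 2 * sL <= (card_in L (Xi_of A))%:R)
         && ((card_in L (Xi_of A))%:R <= 2 * sL)]| <= 2 / L%:R.
Proof.
rewrite bern_probE -bern_prC ger0_norm ?bern_pr_ge0 //.
apply: le_trans (bern_prU p01 (F := [pred A : {set 'I_(mplus L)} | sL < #|A|%:R])
    (G := [pred A : {set 'I_(mplus L)} | #|A|%:R < sL / 4 + 1]) _) _.
  move=> A; apply: contraNT => /norP[]; rewrite -!leNgt /= => le_A ge_A.
  have := card_Xi_le A; have := card_Xi_ge A L_pos.
  rewrite -!(ler_nat R) natrD !natrM => ? ?; apply/andP; split; lra.
apply: le_trans (lerD bern_pr_card_large bern_pr_card_small) _.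
by rewrite [2 / _]mulrC mulr_natr mulr2n lerD.
Qed.

Lemma cos_failure_le :
  `|1 - bern_prob p [pred A : {set 'I_(mplus L)} |
         all (fun a => sL / 32 <= cosV R L (Xi_of A) a) (ZL L)]| <= 1 / L%:R.
Proof.
rewrite bern_probE -bern_prC ger0_norm ?bern_pr_ge0 //.
apply: le_trans (bern_pr_union_bound p01 (s := ZL L) (F := fun a =>
    [pred A : {set 'I_(mplus L)} | #|A :&: large_cos_set R L a|%:R < sL / 16]) _) _.
  move=> A /=; rewrite -has_predC; apply: sub_has => a /=; rewrite -ltNge => lt_V.
  by have := cosV_ge_card R A a L_pos; lra.
apply: le_trans (ler_sum _ (fun a _ => bern_pr_cos_small a)) _.
rewrite big_const_seq count_predT iter_addr_0 size_ZL -[X in X <= _]mulr_natr.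
by rewrite expr2 invfM -mulrA mulVf ?mulr1 ?mul1r // lt0r_neq0.
Qed.

End SparseRegime.

Lemma sparse_regime_eventually (R : realType) (s : nat -> R) :
  (exists N : nat, forall L : nat, (N <= L)%N ->
     ln (L%:R : R) ^+ 9 <= s L <= L%:R / ln (L%:R : R) ^+ 5) ->
  exists N, forall L, (N <= L)%N -> sparse_regime L (s L).
Proof.
case=> N hN; exists (maxn (maxn N 20) (Num.truncn (expR 3 : R)).+1) => L.
rewrite !geq_max => /andP[/andP[NL L20] ML]; have /andP[l9 l5] := hN L NL.
have lnL3 : 3 <= ln (L%:R : R).
  rewrite -[3 in leLHS]expRK ler_ln ?posrE ?expR_gt0 ?ltr0n //; last by lia.
  by apply: le_trans (ltW (truncnS_gt _)) _; rewrite ler_nat.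
split=> //; set l := ln _ in lnL3 l9 l5 *.
  apply: le_trans l9; rewrite exprSr ler_wpM2r //; first lra.
  rewrite (_ : 6561 = 3 ^+ 8); last by rewrite -natrX.
  by rewrite lerXn2r ?nnegrE //; lra.
apply: (le_trans l5); rewrite ler_pdivrMr ?exprn_gt0 ?ler_peMr ?exprn_ege1 //; lra.
Qed.

Local Open Scope classical_set_scope.

Lemma cvg_dist_le_inv (R : realType) (u : nat -> R) (l C : R) (N : nat) :
  (forall n, (N <= n)%N -> `|l - u n| <= C / n%:R) -> u @ \oo --> l.
Proof.
move=> H; apply/cvgrPdist_le => e e0.
exists (maxn N.+1 (Num.truncn (C / e)).+1) => // n /=; rewrite geq_max => /andP[Nn Cn].
have n_gt0 : 0 < n%:R :> R by rewrite ltr0n (leq_trans _ Nn).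
apply: le_trans (H n (ltnW Nn)) _; rewrite ler_pdivrMr // -ler_pdivrMl //.
by rewrite mulrC; apply/ltW/(lt_le_trans (truncnS_gt _)); rewrite ler_nat.
Qed.

Theorem lemma5p8 (R : realType) (s : nat -> R)
  (hs : exists N : nat, forall L : nat, (N <= L)%N ->
          (ln (L%:R : R)) ^+ 9 <= s L <= L%:R / (ln (L%:R : R)) ^+ 5) :
  typically_sparse s (1 / 2) 2 /\ cosine_generic s (fun L => s L / 32).
Proof.
have [N regime] := sparse_regime_eventually hs.
split.
  by apply: (@cvg_dist_le_inv _ _ _ 2 N) => L /regime; apply: sparse_failure_le.
exists (fun=> 0); split; first exact: cvg_cst.
apply: (@cvg_dist_le_inv _ _ _ 1 N) => L /regime hL.
by rewrite subr0 mulr1; apply: cos_failure_le.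
Qed.
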